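(* Let $U_1$ be a vector space concentrated in degree $1$ (hence odd), set $U_0=\mathrm{End}(U_1)$ and recursively $U_{-p+1}=\mathrm{Hom}(U_1,U_{-p+2})$ for $p\ge 2$, and $U_{1-}=\bigoplus_{k\le1}U_k$. Define brackets $U_i\otimes U_j\to U_{i+j}$ for $i+j\le 1$ recursively by $[x,u]=x(u)$, $[u,x]=-(-1)^{|x|}x(u)$, and $[x,y](u)=[x,y(u)]+(-1)^{|y|}[x(u),y]$ for $x,y\in U_{0-}=\bigoplus_{k\le0}U_k$ and $u\in U_1$. Then $U_{1-}$ with this bracket is a semilocal Lie superalgebra (in particular $U_0=\mathfrak{gl}(U_1)$ as a Lie algebra).
   Context: All vector spaces are over $\mathbb{K}=\mathbb{R}$ or $\mathbb{C}$, $\mathbb{Z}$-graded, with parity equal to degree mod 2; $|x|$ is the degree. A semilocal Lie superalgebra is a graded space concentrated in degrees $\le 1$ with bilinear brackets $A_i\otimes A_j\to A_{i+j}$ defined whenever $i+j\le1$, satisfying $[x,y]=-(-1)^{|x||y|}[y,x]$ and $[x,[y,z]]-(-1)^{|x||y|}[y,[x,z]]=[[x,y],z]$ whenever all brackets involved are defined. *)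

From HB Require Import structures.
From mathcomp Require Import all_boot all_order all_algebra.
From mathcomp Require Import boolp zify.
From mathcomp Require Export reals complex.

Set Implicit Arguments.
Unset Strict Implicit.
Unset Printing Implicit Defensive.

Import GRing.Theory.
Local Open Scope ring_scope.

Record hom (K : fieldType) (V W : lmodType K) := Hom {
  hom_fun :> V -> W;
  hom_lin : linear hom_fun }.

Section HomSpace.
Variables (K : fieldType) (V W : lmodType K).

Lemma hom_ext (f g : hom V W) : (forall u, f u = g u) -> f = g.
Proof.
case: f g => [f fl] [g gl] /= efg.
have ef : f = g by apply: funext.
subst g; congr Hom; exact: Prop_irrelevance.
Qed.

HB.instance Definition _ := gen_eqMixin (hom V W).
HB.instance Definition _ := gen_choiceMixin (hom V W).

Lemma hom0_lin : linear (fun _ : V => (0 : W)).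
Proof. by move=> a u v; rewrite scaler0 addr0. Qed.
Definition hom0 := Hom hom0_lin.

Lemma homN_lin (f : hom V W) : linear (fun u => - f u).
Proof. by move=> a u v; rewrite (hom_lin f) opprD scalerN. Qed.
Definition homN f := Hom (homN_lin f).

Lemma homD_lin (f g : hom V W) : linear (fun u => f u + g u).
Proof.
move=> a u v; rewrite (hom_lin f) (hom_lin g) scalerDr.
by rewrite -!addrA; congr (_ + _); rewrite addrCA.
Qed.
Definition homD f g := Hom (homD_lin f g).

Lemma homZ_lin (c : K) (f : hom V W) : linear (fun u => c *: f u).
Proof.
move=> a u v; rewrite (hom_lin f) scalerDr !scalerA.
by rewrite mulrC.
Qed.
Definition homZ c f := Hom (homZ_lin c f).

Lemma homDA : associative homD.
Proof. by move=> f g h; apply: hom_ext => u /=; rewrite addrA. Qed.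
Lemma homDC : commutative homD.
Proof. by move=> f g; apply: hom_ext => u /=; rewrite addrC. Qed.
Lemma hom0D : left_id hom0 homD.
Proof. by move=> f; apply: hom_ext => u /=; rewrite add0r. Qed.
Lemma homND : left_inverse hom0 homN homD.
Proof. by move=> f; apply: hom_ext => u /=; rewrite addNr. Qed.

HB.instance Definition _ :=
  GRing.isZmodule.Build (hom V W) homDA homDC hom0D homND.

Lemma homZA a b (f : hom V W) : homZ a (homZ b f) = homZ (a * b) f.
Proof. by apply: hom_ext => u /=; rewrite scalerA. Qed.
Lemma homZ1 : left_id 1 homZ.
Proof. by move=> f; apply: hom_ext => u /=; rewrite scale1r. Qed.
Lemma homZDr : right_distributive homZ +%R.
Proof. by move=> a f g; apply: hom_ext => u /=; rewrite scalerDr. Qed.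
Lemma homZDl (f : hom V W) : {morph homZ^~ f : a b / a + b}.
Proof. by move=> a b; apply: hom_ext => u /=; rewrite scalerDl. Qed.

HB.instance Definition _ :=
  GRing.Zmodule_isLmodule.Build K (hom V W) homZA homZ1 homZDr homZDl.

End HomSpace.

(* The graded pieces.  We index by the "depth" n : nat, the piece of depth n *)
(* being U_{1-n} (degree 1 - n):                                             *)
(*    U n.0 = U_1 = V,   U (n.+1) = Hom(U_1, U n)  (so U 1 = End(U_1) = U_0,  *)
(*    U 2 = Hom(U_1, U_0) = U_{-1}, ..., U p = U_{-p+1}).                    *)

Fixpoint U (K : fieldType) (V : lmodType K) (n : nat) : lmodType K :=
  match n with
  | 0 => V
  | n'.+1 => (hom V (U V n') : lmodType K)
  end.

Definition deg (n : nat) : int := (1 - n%:Z)%R.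
Definition parity (n : nat) : bool := odd `|deg n|%N.

Definition sgn (K : fieldType) (n : nat) : K := (-1) ^+ parity n.
Definition sgn2 (K : fieldType) (m n : nat) : K := (-1) ^+ (parity m && parity n).

Definition castU (K : fieldType) (V : lmodType K) (m n : nat) (e : m = n)
  (x : U V m) : U V n := ecast k (U V k) e x.

(* A family of brackets on the homogeneous pieces:  [U_{1-d}, U_{1-e}] ->
   U_{1-(d+e-1)}; it is only meaningful when the bracket is defined, i.e.
   when (1-d)+(1-e) <= 1, i.e. (0 < d + e)%N. *)
Definition bracket_family (K : fieldType) (V : lmodType K) :=
  forall d e : nat, U V d -> U V e -> U V (d + e).-1.

Lemma eq_jac1 (d e f : nat) : (0 < e + f)%N -> (0 < d + e)%N ->
  (d + (e + f).-1).-1 = ((d + e).-1 + f).-1.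
Proof. move=> h h2; rewrite -!subn1; lia. Qed.
Lemma eq_jac2 (d e f : nat) : (0 < d + f)%N -> (0 < d + e)%N ->
  (e + (d + f).-1).-1 = ((d + e).-1 + f).-1.
Proof. move=> h1 h2; rewrite -!subn1; lia. Qed.
Lemma eq_app_l (d : nat) : d = (d.+1 + 0).-1.
Proof. by rewrite addn0. Qed.
Lemma eq_app_r (d e : nat) : (d + e.+1).-1 = d + e.
Proof. by rewrite addnS. Qed.
Lemma eq_hom (d e : nat) : (d.+1 + e.+1).-1 = (d + e).+1.
Proof. by rewrite addSn addnS. Qed.
Lemma eq_comm (d e : nat) : (e + d).-1 = (d + e).-1.
Proof. by rewrite addnC. Qed.

Definition is_U_bracket (K : fieldType) (V : lmodType K)
    (br : bracket_family V) : Prop :=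
  [/\ (forall d (x : U V d.+1) (u : U V 0),
          br d.+1 0 x u = castU (eq_app_l d) (x u)),
      (forall e (u : U V 0) (x : U V e.+1),
          br 0 e.+1 u x = - (sgn K e.+1 *: x u)) &
      (forall d e (x : U V d.+1) (y : U V e.+1) (u : U V 0),
          (castU (eq_hom d e) (br d.+1 e.+1 x y) : U V (d + e).+1) u
          = br d.+1 e x (y u)
            + sgn K e.+1 *: castU (eq_app_r d e) (br d e.+1 (x u) y))].

Definition semilocal_Lie_super (K : fieldType) (V : lmodType K)
    (br : bracket_family V) : Prop :=
  [/\
      (forall d e, (0 < d + e)%N -> forall (a : K) (x x' : U V d) (y : U V e),
          br d e (a *: x + x') y = a *: br d e x y + br d e x' y),
      (forall d e, (0 < d + e)%N -> forall (a : K) (x : U V d) (y y' : U V e),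
          br d e x (a *: y + y') = a *: br d e x y + br d e x y'),
      (forall d e (h : (0 < d + e)%N) (x : U V d) (y : U V e),
          br d e x y = - (sgn2 K d e *: castU (eq_comm d e) (br e d y x))) &
      (forall d e f (hde : (0 < d + e)%N) (hef : (0 < e + f)%N) (hdf : (0 < d + f)%N)
              (hdef : (1 < d + e + f)%N) (x : U V d) (y : U V e) (z : U V f),
          castU (@eq_jac1 d e f hef hde) (br d (e + f).-1 x (br e f y z))
          - sgn2 K d e *: castU (@eq_jac2 d e f hdf hde) (br e (d + f).-1 y (br d f x z))
          = br (d + e).-1 f (br d e x y) z)].

Definition prop3p1_for (K : fieldType) (V : lmodType K) : Prop :=
  (exists br : bracket_family V, is_U_bracket br) /\
  (forall br : bracket_family V, is_U_bracket br ->
     semilocal_Lie_super br /\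
     (forall (x y : U V 1) (u : V),
        (br 1 1 x y : U V 1) u = x (y u) - y (x u))).

From Pilot Require Import Defs.
From mathcomp Require Import all_boot all_algebra reals complex.
From mathcomp Require Import zify ring.

Set Implicit Arguments.
Unset Strict Implicit.
Unset Printing Implicit Defensive.

Import GRing.Theory.
Local Open Scope ring_scope.

(* An element of U_{1-n} is an n-linear map V^n -> V, hence is determined by
   its values on lists of n vectors.  Evaluated at a vector u, the defining
   relations express [x,y] through brackets of total depth one less (the
   contraction x |-> x(u) is a super-derivation of the bracket), while the
   brackets with U_1 are explicit.  Bilinearity, super-antisymmetry and the
   super-Jacobi identity therefore follow, after evaluation, by induction on
   the total depth.  Existence is a recursion on the depths of both arguments,
   bilinearity being carried along so that each [x,y] is again a linear map. *)

Lemma parityE n : parity n = ~~ odd n.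
Proof.
rewrite /parity /deg; case: n => [|n] //.
have -> : (1 - n.+1%:Z = - n%:Z)%R.
  by rewrite -addn1 PoszD opprD addrA addrC addrA addNr add0r.
by rewrite abszN absz_nat /= negbK.
Qed.

Lemma odd_predn n : (0 < n)%N -> odd n.-1 = ~~ odd n.
Proof. by case: n => // n _; rewrite /= negbK. Qed.

(* Sign identities: every sign is (-1) ^+ b with b a boolean expression in the
   parities of the depths; positivity hypotheses must be in the context. *)
Ltac signs := rewrite /sgn2 /sgn !parityE ?odd_predn ?oddD /=; try lia;
  repeat match goal with |- context [odd ?n] => case: (odd n) end;
  rewrite /= ?expr0 ?expr1; ring.

Section Graded.
Variables (K : fieldType) (V : lmodType K).
Local Notation U := (U V).

Lemma castU_id n (e : n = n) (x : U n) : castU e x = x.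
Proof. by rewrite (eq_irrelevance e (erefl n)). Qed.

Lemma castU_lin m n (e : m = n) a (w w' : U m) :
  castU e (a *: w + w') = a *: castU e w + castU e w'.
Proof. by case: n / e. Qed.

Lemma castUK m n (e : m = n) (w : U n) : castU e (castU (esym e) w) = w.
Proof. by subst n. Qed.

Lemma scalerDACA (W : lmodType K) (a c : K) (A B C D : W) :
  (a *: A + B) + c *: (a *: C + D) = a *: (A + c *: C) + (B + c *: D).
Proof. by rewrite !scalerDr !scalerA mulrC addrACA. Qed.

Lemma oppr_scalerD (W : lmodType K) (a c : K) (A B : W) :
  - (c *: (a *: A + B)) = a *: - (c *: A) + - (c *: B).
Proof. by rewrite scalerDr opprD !scalerN !scalerA mulrC. Qed.

Lemma jacobi_rearrange (W : lmodType K) (g g' g'' sf se s1 s2 : K)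
    (A1 A2 B1 B2 C1 C2 : W) :
  s1 = sf * se -> g * s2 = sf * g' -> g * sf = sf * se * g'' ->
  (A1 + sf *: B1 + s1 *: C1) - g *: (A2 + sf *: C2 + s2 *: B2)
  = (A1 - g *: A2) + sf *: ((B1 - g' *: B2) + se *: (C1 - g'' *: C2)).
Proof.
move=> -> h2 h3; rewrite !scalerDr !scalerN !scalerA h2 h3.
suff ac (A P Q R S T : W) : A + P + Q - (R + S + T) = A - R + (P - T + (Q - S)).
  exact: ac.
rewrite !opprD !addrA [A - R + P]addrAC [A + P - R - T + Q]addrAC.
by rewrite [A + P - R + Q]addrAC [A + P + Q - R - T - S]addrAC.
Qed.

(* [evalU w (u1 :: u2 :: ...)] is w(u1)(u2)...; missing arguments are 0. *)
Fixpoint evalU n : U n -> seq V -> V :=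
  match n with
  | 0 => fun w _ => w
  | n'.+1 => fun w s => evalU (w (head 0 s)) (behead s)
  end.

Lemma evalU_ext n (w1 w2 : U n) : (forall s, evalU w1 s = evalU w2 s) -> w1 = w2.
Proof.
elim: n w1 w2 => [|n IH] w1 w2 H; first exact: (H [::]).
apply: hom_ext => u; apply: IH => s; exact: (H (u :: s)).
Qed.

Lemma evalU_lin n a (w1 w2 : U n) s :
  evalU (a *: w1 + w2) s = a *: evalU w1 s + evalU w2 s.
Proof. by elim: n w1 w2 s => [|n IH] w1 w2 s //=; rewrite IH. Qed.

Lemma evalU0 n s : evalU (0 : U n) s = 0.
Proof. by elim: n s => [|n IH] s //=; rewrite IH. Qed.

Lemma evalUZ n a (w : U n) s : evalU (a *: w) s = a *: evalU w s.
Proof. by rewrite -[a *: w]addr0 evalU_lin evalU0 addr0. Qed.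

Lemma evalUD n (w1 w2 : U n) s : evalU (w1 + w2) s = evalU w1 s + evalU w2 s.
Proof. by have := evalU_lin 1 w1 w2 s; rewrite !scale1r. Qed.

Lemma evalUN n (w : U n) s : evalU (- w) s = - evalU w s.
Proof. by rewrite -scaleN1r evalUZ scaleN1r. Qed.

Lemma evalU_cast m n (e : m = n) (w : U m) s : evalU (castU e w) s = evalU w s.
Proof. by case: n / e. Qed.

(* Extended by the identity on U 0, so that lemmas need not destruct the
   depth. *)
Definition appU n : U n -> V -> U n.-1 :=
  match n with 0 => fun w _ => w | n'.+1 => fun w u => w u end.

Lemma appU_lin n a (w1 w2 : U n) u :
  appU (a *: w1 + w2) u = a *: appU w1 u + appU w2 u.
Proof. by case: n w1 w2. Qed.

Lemma appU_linr n (w : U n) a u1 u2 : (0 < n)%N ->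
  appU w (a *: u1 + u2) = a *: appU w u1 + appU w u2.
Proof. by case: n w => // n w _ /=; rewrite (hom_lin w). Qed.

Lemma evalU_app n (w : U n) u t : evalU (appU w u) t = evalU w (u :: t).
Proof. by case: n w. Qed.

Section Bracket.
Variable br : bracket_family V.
Hypothesis hbr : is_U_bracket br.

Lemma br_vecr d (x : U d.+1) (u : U 0) : br x u = castU (eq_app_l d) (x u).
Proof. by case: hbr. Qed.

Lemma br_vecl e (u : U 0) (x : U e.+1) : br u x = - (sgn K e.+1 *: x u).
Proof. by case: hbr. Qed.

Lemma br_app d e (x : U d.+1) (y : U e.+1) (u : U 0) :
  (castU (eq_hom d e) (br x y) : U (d + e).+1) u
  = br x (y u) + sgn K e.+1 *: castU (eq_app_r d e) (br (x u) y).
Proof. by case: hbr. Qed.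

Lemma evalU_br_vecr d (x : U d) (u : V) s : (0 < d)%N ->
  evalU (br x (u : U 0)) s = evalU (appU x u) s.
Proof. by case: d x => // d x _; rewrite br_vecr evalU_cast. Qed.

Lemma evalU_br_vecl e (u : V) (x : U e) s : (0 < e)%N ->
  evalU (br (u : U 0) x) s = - (sgn K e *: evalU (appU x u) s).
Proof. by case: e x => // e x _; rewrite br_vecl evalUN evalUZ. Qed.

Lemma evalU_br d e (x : U d) (y : U e) s : (0 < d)%N -> (0 < e)%N ->
  evalU (br x y) s = evalU (br x (appU y (head 0 s))) (behead s)
     + sgn K e *: evalU (br (appU x (head 0 s)) y) (behead s).
Proof.
case: d x => // d x _; case: e y => // e y _.
by rewrite -(evalU_cast (eq_hom d e)) /= br_app evalUD evalUZ evalU_cast.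
Qed.

Lemma evalU_app_br d e (x : U d) (y : U e) u t : (0 < d)%N -> (0 < e)%N ->
  evalU (appU (br x y) u) t
  = evalU (br x (appU y u)) t + sgn K e *: evalU (br (appU x u) y) t.
Proof. by move=> dp ep; rewrite evalU_app (evalU_br _ _ (u :: t)). Qed.

Lemma br_bilin_le n d e : (d + e <= n)%N -> (0 < d + e)%N ->
  (forall a (x x' : U d) (y : U e), br (a *: x + x') y = a *: br x y + br x' y) /\
  (forall a (x : U d) (y y' : U e), br x (a *: y + y') = a *: br x y + br x y').
Proof.
elim: n d e => [|n IH] d e hn hp; first by lia.
split=> a x x' y; apply: evalU_ext => s; rewrite evalU_lin.
- have [d0|dp] := posnP d.
    by subst d; rewrite !evalU_br_vecl ?appU_linr ?evalU_lin ?oppr_scalerD.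
  have [e0|ep] := posnP e.
    by subst e; rewrite !evalU_br_vecr ?appU_lin ?evalU_lin.
  have [IHr _] := IH d e.-1 ltac:(lia) ltac:(lia).
  have [IHl _] := IH d.-1 e ltac:(lia) ltac:(lia).
  by rewrite !(evalU_br _ _ s) // appU_lin IHr IHl !evalU_lin scalerDACA.
- have [d0|dp] := posnP d.
    by subst d; rewrite !evalU_br_vecl ?appU_lin ?evalU_lin ?oppr_scalerD.
  have [e0|ep] := posnP e.
    by subst e; rewrite !evalU_br_vecr ?appU_linr ?evalU_lin.
  have [_ IHr] := IH d e.-1 ltac:(lia) ltac:(lia).
  have [_ IHl] := IH d.-1 e ltac:(lia) ltac:(lia).
  by rewrite !(evalU_br _ _ s) // appU_lin IHr IHl !evalU_lin scalerDACA.
Qed.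

Lemma br_linl d e : (0 < d + e)%N ->
  forall a (x x' : U d) (y : U e), br (a *: x + x') y = a *: br x y + br x' y.
Proof. by move=> hp; case: (br_bilin_le (leqnn _) hp). Qed.

Lemma br_linr d e : (0 < d + e)%N ->
  forall a (x : U d) (y y' : U e), br x (a *: y + y') = a *: br x y + br x y'.
Proof. by move=> hp; case: (br_bilin_le (leqnn _) hp). Qed.

Lemma br0l d e (y : U e) : (0 < d + e)%N -> br (0 : U d) y = 0.
Proof.
move=> hp; have := br_linl hp (-1) 0 0 y.
by rewrite !scaleN1r addr0 oppr0 addNr.
Qed.

Lemma br0r d e (x : U d) : (0 < d + e)%N -> br x (0 : U e) = 0.
Proof.
move=> hp; have := br_linr hp (-1) x 0 0.
by rewrite !scaleN1r addr0 oppr0 addNr.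
Qed.

Lemma evalU_br_antisym_le n d e : (d + e <= n)%N -> (0 < d + e)%N ->
  forall (x : U d) (y : U e) s, evalU (br x y) s = - (sgn2 K d e *: evalU (br y x) s).
Proof.
elim: n d e => [|n IH] d e hn hp x y s; first by lia.
have [d0|dp] := posnP d; first by subst d; rewrite evalU_br_vecl // evalU_br_vecr.
have [e0|ep] := posnP e.
  subst e; rewrite evalU_br_vecl // evalU_br_vecr // scalerN opprK scalerA.
  by rewrite -[LHS]scale1r; congr (_ *: _); signs.
rewrite !(evalU_br _ _ s) // (IH e d.-1) ?(IH e.-1 d); try lia.
rewrite scalerDr opprD !scalerN !opprK !scalerA addrC -[X in _ + X = _]scale1r.
by congr (_ *: _ + _ *: _); signs.
Qed.

Lemma br_antisym d e (hp : (0 < d + e)%N) (x : U d) (y : U e) :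
  br x y = - (sgn2 K d e *: castU (eq_comm d e) (br y x)).
Proof.
apply: evalU_ext => s; rewrite evalUN evalUZ evalU_cast.
exact: (evalU_br_antisym_le (leqnn _)).
Qed.

(* Transport of evaluation identities into a bracket argument whose depth is
   only propositionally equal to the expected one. *)
Lemma evalU_br_r d k k1 (x : U d) (w : U k) (w1 : U k1) s : k1 = k ->
  (forall t, evalU w t = evalU w1 t) -> evalU (br x w) s = evalU (br x w1) s.
Proof. by move=> E; subst k1 => h; rewrite (evalU_ext h). Qed.

Lemma evalU_br_l d k k1 (z : U d) (w : U k) (w1 : U k1) s : k1 = k ->
  (forall t, evalU w t = evalU w1 t) -> evalU (br w z) s = evalU (br w1 z) s.
Proof. by move=> E; subst k1 => h; rewrite (evalU_ext h). Qed.

Lemma evalU_br_rZ d k k1 (x : U d) (w : U k) (w1 : U k1) a s :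
  k1 = k -> (0 < d + k)%N ->
  (forall t, evalU w t = a *: evalU w1 t) -> evalU (br x w) s = a *: evalU (br x w1) s.
Proof.
move=> E; subst k1 => hp h.
have -> : w = a *: w1 + 0 by apply: evalU_ext => t; rewrite evalU_lin evalU0 addr0.
by rewrite br_linr // br0r // addr0 evalUZ.
Qed.

Lemma evalU_br_lZ d k k1 (z : U d) (w : U k) (w1 : U k1) a s :
  k1 = k -> (0 < k + d)%N ->
  (forall t, evalU w t = a *: evalU w1 t) -> evalU (br w z) s = a *: evalU (br w1 z) s.
Proof.
move=> E; subst k1 => hp h.
have -> : w = a *: w1 + 0 by apply: evalU_ext => t; rewrite evalU_lin evalU0 addr0.
by rewrite br_linl // br0l // addr0 evalUZ.
Qed.

Lemma evalU_br_rD d k k1 k2 (x : U d) (w : U k) (w1 : U k1) (w2 : U k2) c s :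
  k1 = k -> k2 = k -> (0 < d + k)%N ->
  (forall t, evalU w t = evalU w1 t + c *: evalU w2 t) ->
  evalU (br x w) s = evalU (br x w1) s + c *: evalU (br x w2) s.
Proof.
move=> E1 E2; subst k1 k2 => hp h.
have -> : w = c *: w2 + w1 by apply: evalU_ext => t; rewrite evalU_lin addrC.
by rewrite br_linr // evalU_lin addrC.
Qed.

Lemma evalU_br_lD d k k1 k2 (z : U d) (w : U k) (w1 : U k1) (w2 : U k2) c s :
  k1 = k -> k2 = k -> (0 < k + d)%N ->
  (forall t, evalU w t = evalU w1 t + c *: evalU w2 t) ->
  evalU (br w z) s = evalU (br w1 z) s + c *: evalU (br w2 z) s.
Proof.
move=> E1 E2; subst k1 k2 => hp h.
have -> : w = c *: w2 + w1 by apply: evalU_ext => t; rewrite evalU_lin addrC.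
by rewrite br_linl // evalU_lin addrC.
Qed.

Lemma evalU_jacobi_vecr d e (x : U d) (y : U e) (z : U 0) s :
  (0 < d)%N -> (0 < e)%N ->
  evalU (br x (br y z)) s - sgn2 K d e *: evalU (br y (br x z)) s
  = evalU (br (br x y) z) s.
Proof.
move=> dp ep.
rewrite (@evalU_br_r _ _ _ x (br y z) (appU y z)); first last.
- by move=> t; exact: evalU_br_vecr.
- by rewrite addn0.
rewrite (@evalU_br_r _ _ _ y (br x z) (appU x z)); first last.
- by move=> t; exact: evalU_br_vecr.
- by rewrite addn0.
rewrite evalU_br_vecr ?evalU_app_br; try lia.
rewrite (evalU_br_antisym_le (leqnn _) _ y (appU x z)); last by lia.
rewrite scalerN opprK scalerA; congr (_ + _ *: _); signs.
Qed.

Lemma evalU_jacobi_vecm d f (x : U d) (y : U 0) (z : U f) s :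
  (0 < d)%N -> (0 < f)%N ->
  evalU (br x (br y z)) s - sgn2 K d 0 *: evalU (br y (br x z)) s
  = evalU (br (br x y) z) s.
Proof.
move=> dp fp.
rewrite (@evalU_br_rZ _ _ _ x (br y z) (appU z y) (- sgn K f)); first last.
- by move=> t; rewrite evalU_br_vecl // scaleNr.
- by lia.
- by [].
rewrite evalU_br_vecl ?evalU_app_br; try lia.
rewrite (@evalU_br_l _ _ _ z (br x y) (appU x y)); first last.
- by move=> t; exact: evalU_br_vecr.
- by rewrite addn0.
rewrite scalerN opprK !scalerDr !scalerA addrA scaleNr.
have -> : sgn2 K d 0 * sgn K (d + f).-1 = sgn K f by signs.
rewrite addNr add0r mulrA -[RHS]scale1r; congr (_ *: _); signs.
Qed.

Lemma evalU_jacobi_vecl e f (x : U 0) (y : U e) (z : U f) s :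
  (0 < e)%N -> (0 < f)%N ->
  evalU (br x (br y z)) s - sgn2 K 0 e *: evalU (br y (br x z)) s
  = evalU (br (br x y) z) s.
Proof.
move=> ep fp.
rewrite evalU_br_vecl ?evalU_app_br; try lia.
rewrite (@evalU_br_rZ _ _ _ y (br x z) (appU z x) (- sgn K f)) //; first last.
- by move=> t; rewrite evalU_br_vecl // scaleNr.
- by lia.
rewrite (@evalU_br_lZ _ _ _ z (br x y) (appU y x) (- sgn K e)) //; first last.
- by move=> t; rewrite evalU_br_vecl // scaleNr.
- by lia.
rewrite scalerA scalerDr opprD scalerA addrAC.
have -> : sgn2 K 0 e * - sgn K f = - sgn K (e + f).-1 by signs.
rewrite scaleNr opprK addNr add0r -scaleNr; congr (_ *: _); signs.
Qed.

Lemma evalU_jacobi_le n d e f : (d + e + f <= n)%N -> (0 < d + e)%N ->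
  (0 < e + f)%N -> (0 < d + f)%N ->
  forall (x : U d) (y : U e) (z : U f) s,
  evalU (br x (br y z)) s - sgn2 K d e *: evalU (br y (br x z)) s
  = evalU (br (br x y) z) s.
Proof.
elim: n d e f => [|n IH] d e f hn hde hef hdf x y z s; first by lia.
have [f0|fp] := posnP f; first by subst f; apply: evalU_jacobi_vecr; lia.
have [e0|ep] := posnP e; first by subst e; apply: evalU_jacobi_vecm; lia.
have [d0|dp] := posnP d; first by subst d; apply: evalU_jacobi_vecl.
rewrite (evalU_br x (br y z)) ?(evalU_br y (br x z)) ?(evalU_br (br x y) z); try lia.
set u := head 0 s; set t := behead s.
rewrite (@evalU_br_rD _ _ _ _ x _ _ _ _ t _ _ _
  (fun r => evalU_app_br y z u r ep fp)); try lia.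
rewrite (@evalU_br_rD _ _ _ _ y _ _ _ _ t _ _ _
  (fun r => evalU_app_br x z u r dp fp)); try lia.
rewrite (@evalU_br_lD _ _ _ _ z _ _ _ _ t _ _ _
  (fun r => evalU_app_br x y u r dp ep)); try lia.
rewrite -(IH d e f.-1) -?(IH d e.-1 f) -?(IH d.-1 e f); try lia.
by apply: jacobi_rearrange; signs.
Qed.

End Bracket.

Definition bilin d e (f : U d -> U e -> U (d + e).-1) :=
  (forall y, linear (f^~ y)) /\ (forall x, linear (f x)).

Definition br_vecl_fun e : U 0 -> U e -> U (0 + e).-1 :=
  match e return U 0 -> U e -> U (0 + e).-1 with
  | 0 => fun _ _ => 0
  | e'.+1 => fun u x => - (sgn K e'.+1 *: x u)
  end.

Lemma br_vecl_bilin e : bilin (@br_vecl_fun e).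
Proof.
case: e => [|e]; split => /=.
- by move=> y a u v; rewrite scaler0 addr0.
- by move=> x a u v; rewrite scaler0 addr0.
- by move=> x a u v /=; rewrite (hom_lin x) oppr_scalerD.
- by move=> u a x x' /=; rewrite oppr_scalerD.
Qed.

Lemma br_vecr_bilin d :
  bilin (fun (x : U d.+1) (u : U 0) => castU (eq_app_l d) (x u)).
Proof.
split.
- by move=> u a x x' /=; rewrite castU_lin.
- by move=> x a u v /=; rewrite (hom_lin x) castU_lin.
Qed.

Section BracketStep.
Variables (d e : nat) (g : U d -> U e.+1 -> U (d + e.+1).-1)
  (h : U d.+1 -> U e -> U (d + e)).
Hypotheses (g_bilin : bilin g)
  (h_bilin : bilin (h : U d.+1 -> U e -> U (d.+1 + e).-1)).

Definition br_step_fun (x : U d.+1) (y : U e.+1) (u : V) : U (d + e) :=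
  h x (y u) + sgn K e.+1 *: castU (eq_app_r d e) (g (x u) y).

Lemma br_step_lin x y : linear (br_step_fun x y).
Proof.
move=> a u v; rewrite /br_step_fun (hom_lin y) (h_bilin.2 x) (hom_lin x).
by rewrite (g_bilin.1 y) castU_lin scalerDACA.
Qed.

Definition br_step x y : U (d.+1 + e.+1).-1 :=
  castU (esym (eq_hom d e)) (Defs.Hom (br_step_lin x y)).

Lemma br_step_bilin : bilin br_step.
Proof.
split=> [y a x x'|x a y y']; rewrite /br_step -castU_lin; congr castU;
  apply: hom_ext => u /=; rewrite /br_step_fun /=.
- by rewrite (h_bilin.1 (y u)) (g_bilin.1 y) castU_lin scalerDACA.
- by rewrite (h_bilin.2 x) (g_bilin.2 (x u)) castU_lin scalerDACA.
Qed.

End BracketStep.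

(* [br d.+1 e.+1] is computed from [br d e.+1] (for [x(u), y]) and
   [br d.+1 e] (for [x, y(u)]); bilinearity is carried along in the sigma type
   because the step needs it to produce linear maps. *)
Fixpoint br_succ d (brd : forall e, {f : U d -> U e -> U (d + e).-1 | bilin f})
    (e : nat) : {f : U d.+1 -> U e -> U (d.+1 + e).-1 | bilin f} :=
  match e return {f : U d.+1 -> U e -> U (d.+1 + e).-1 | bilin f} with
  | 0 => exist _ _ (br_vecr_bilin d)
  | e'.+1 =>
      exist _ _ (br_step_bilin (proj2_sig (brd e'.+1)) (proj2_sig (br_succ brd e')))
  end.

Fixpoint brU_bilin d : forall e, {f : U d -> U e -> U (d + e).-1 | bilin f} :=
  match d return forall e, {f : U d -> U e -> U (d + e).-1 | bilin f} with
  | 0 => fun e => exist _ _ (br_vecl_bilin e)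
  | d'.+1 => br_succ (brU_bilin d')
  end.

Definition brU : bracket_family V := fun d e => proj1_sig (brU_bilin d e).

Lemma brU_is_U_bracket : is_U_bracket brU.
Proof. by split=> // d e x y u; rewrite /brU /= /br_step castUK. Qed.

Lemma br_End (br : bracket_family V) : is_U_bracket br ->
  forall (x y : U 1) (u : V), (br 1 1 x y : U 1) u = x (y u) - y (x u).
Proof.
move=> hbr x y u; have := br_app hbr x y u.
rewrite castU_id => ->; rewrite (br_vecr hbr) (br_vecl hbr) !castU_id.
by rewrite /sgn parityE /= expr0 !scale1r.
Qed.

Lemma U_bracket_semilocal_Lie_super (br : bracket_family V) :
  is_U_bracket br -> semilocal_Lie_super br.
Proof.
move=> hbr; split.
- exact: br_linl.
- exact: br_linr.
- exact: br_antisym.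
- move=> d e f hde hef hdf _ x y z; apply: evalU_ext => s.
  rewrite evalUD evalUN evalUZ !evalU_cast.
  exact: (evalU_jacobi_le hbr (leqnn _)).
Qed.

Lemma prop3p1_lmod : prop3p1_for V.
Proof.
split; first by exists brU; exact: brU_is_U_bracket.
by move=> br hbr; split; [exact: U_bracket_semilocal_Lie_super | exact: br_End].
Qed.

End Graded.

Theorem proposition3p1 (R : realType) :
  (forall V : lmodType R, prop3p1_for V) /\
  (forall V : lmodType R[i], prop3p1_for V).
Proof. by split=> V; apply: prop3p1_lmod. Qed.
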